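(* Under the setting described in the context, each of the operators $F$, $F_h^+$ and $\hat F_h^+$ admits a distance-like additive eigenvector: there exist $\lambda\in\mathbb{R}$ and a distance-like $v\in\operatorname{Lip}_1(X)$ with $Fv=\lambda+v$; similarly for $F_h^+$ on $\operatorname{Lip}_1(X)$ and for $\hat F_h^+$ on $\operatorname{Lip}_1(X_h)$.
   Context: Let $C\subset\mathbb{R}^n$ be a pointed closed convex cone, $C^*$ its dual cone, $e^*\in\operatorname{int}C^*$, and $\Delta=\{x\in C:\langle x,e^*\rangle=1\}$. $x\le_C y$ means $y-x\in C$; the Funk hemi-metric on $\operatorname{Int}C$ is $\operatorname{Funk}(x,y)=\log\inf\{\lambda>0:x\le_C\lambda y\}$ and Hilbert's metric is $\operatorname{Hil}(x,y)=\operatorname{Funk}(x,y)+\operatorname{Funk}(y,x)$. Let $\mathcal{A},\mathcal{B}$ be nonempty compact action sets and $(T_{ab})_{(a,b)\in\mathcal{A}\times\mathcal{B}}$ self-maps of $\operatorname{Int}C$ that are nonexpansive for $\operatorname{Funk}$, such that for each $x$ the maps $a\mapsto T_{ab}(x)$, $b\mapsto T_{ab}(x)$ are continuous and for each compact $K$ the set $\{T_{ab}(x):(a,b,x)\in\mathcal{A}\times\mathcal{B}\times K\}$ is compact, and each $T_{ab}$ extends continuously to $C$. Small cone assumption: there is a closed cone $K\subset C$ with $T_{ab}(K)\subset K$ for all $a,b$ and $X:=K\cap\Delta\subset\operatorname{relint}\Delta$. For $h>0$, $X_h\subset X$ is a finite set with $X\subset\bigcup_{y\in X_h}\{x:\operatorname{Hil}(x,y)<h\}$.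 For $Y\subset\operatorname{Int}C$, $\operatorname{Lip}_1(Y)$ is the set of $f:Y\to\mathbb{R}$ with $f(x)-f(y)\le\operatorname{Funk}(x,y)$ on $Y$. Define $F:\operatorname{Lip}_1(X)\to\operatorname{Lip}_1(X)$ by $Fv(x)=\inf_{a\in\mathcal{A}}\sup_{b\in\mathcal{B}}\big[\log\langle T_{ab}(x),e^*\rangle+v\big(T_{ab}(x)/\langle T_{ab}(x),e^*\rangle\big)\big]$; $I_h^+:\mathbb{R}^{X_h}\to\mathbb{R}^X$, $I_h^+v(x)=\min_{y\in X_h}[v(y)+\operatorname{Funk}(x,y)]$; $R_h:\mathbb{R}^X\to\mathbb{R}^{X_h}$ the restriction; $F_h^+=FI_h^+R_h$ on $\operatorname{Lip}_1(X)$ and $\hat F_h^+=R_hFI_h^+$ on $\operatorname{Lip}_1(X_h)$. A function $v\in\operatorname{Lip}_1(Y)$ is distance-like if $v(x)\ge\alpha+\operatorname{Funk}(x,x_1)$ for all $x\in Y$, for some $x_1\in Y$, $\alpha\in\mathbb{R}$. *)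

From mathcomp Require Import all_boot all_order all_algebra.
From mathcomp Require Import all_classical all_reals all_analysis.
Import Order.TTheory GRing.Theory Num.Theory.
Import numFieldNormedType.Exports.

Set Implicit Arguments.
Unset Strict Implicit.
Unset Printing Implicit Defensive.

Local Open Scope classical_set_scope.
Local Open Scope ring_scope.

Section Defs.
Variables (R : realType) (n : nat).
Local Notation V := 'rV[R]_n.

Definition dotp (x y : V) : R := \sum_(i < n) x ord0 i * y ord0 i.

Definition is_convex_cone (C : set V) : Prop :=
  [/\ C 0, (forall x y, C x -> C y -> C (x + y))
     & (forall (t : R) x, 0 <= t -> C x -> C (t *: x))].

Definition is_cone (K : set V) : Prop :=
  K 0 /\ forall (t : R) x, 0 <= t -> K x -> K (t *: x).

Definition pointed (C : set V) : Prop :=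
  forall x, C x -> C (- x) -> x = 0.

Definition dual_cone (C : set V) : set V :=
  [set phi | forall x, C x -> 0 <= dotp x phi].

Definition simplex (C : set V) (e : V) : set V :=
  [set x | C x /\ dotp x e = 1].

Definition affine_set (A : set V) : Prop :=
  forall x y (t : R), A x -> A y -> A (x + t *: (y - x)).

Definition aff_hull (S : set V) : set V :=
  [set x | forall A, affine_set A -> S `<=` A -> A x].

Definition relint (S : set V) : set V :=
  [set x | S x /\ exists2 eps : R, 0 < eps &
             forall y, aff_hull S y -> ball x eps y -> S y].

Definition Funk (C : set V) (x y : V) : R :=
  ln (inf [set l : R | 0 < l /\ C (l *: y - x)]).

Definition Hil (C : set V) (x y : V) : R := Funk C x y + Funk C y x.

Definition Lip1 (C : set V) (Y : set V) (f : V -> R) : Prop :=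
  forall x y, Y x -> Y y -> f x - f y <= Funk C x y.

Definition distance_like (C : set V) (Y : set V) (f : V -> R) : Prop :=
  exists2 x1, Y x1 & exists alpha : R,
    forall x, Y x -> alpha + Funk C x x1 <= f x.

Definition Fop (TA TB : Type) (Aset : set TA) (Bset : set TB)
    (T : TA -> TB -> V -> V) (e : V) (v : V -> R) (x : V) : R :=
  inf [set sup [set ln (dotp (T a b x) e)
                    + v ((dotp (T a b x) e)^-1 *: T a b x) | b in Bset]
      | a in Aset].

Definition Iplus (C : set V) (Xh : set V) (v : V -> R) (x : V) : R :=
  inf [set v y + Funk C x y | y in Xh].

End Defs.

(* All three operators are topical on their domain Y (X or X_h): they map
   1-Lipschitz functions for Funk to such functions, are monotone, and commute
   with the addition of constants.  Under the small cone assumption X is a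
   compact subset of the relative interior of the simplex, on which Funk is
   bounded and small near the diagonal, so X is totally bounded; X_h is finite.
   On such a Y a topical G has an additive eigenvector: G^k 0 (y0) is additive
   in k up to the diameter D, hence equals k lam + O(D); the orbit of 0 under
   G - lam is then bounded, its pointwise limsup is a subsolution, and the
   increasing iterates of that subsolution converge, uniformly thanks to total
   boundedness, to a fixed point.  Finally, 1-Lipschitz functions on a set of
   bounded Funk diameter are distance-like. *)

From mathcomp Require Import all_boot all_order all_algebra.
From mathcomp Require Import all_classical all_reals all_analysis.
From mathcomp Require Import finmap ring lra.
Import Order.TTheory GRing.Theory Num.Theory.
Import numFieldNormedType.Exports.
Local Open Scope classical_set_scope.
Local Open Scope ring_scope.
Set Implicit Arguments.
Unset Strict Implicit.
Unset Printing Implicit Defensive.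

Section SupInfImage.
Variables (R : realType) (I : Type) (S : set I) (g : I -> R).

Lemma le_sup_img M : (forall i, S i -> g i <= M) ->
  forall i, S i -> g i <= sup [set g i | i in S].
Proof.
move=> gM i Si; apply: ub_le_sup; last by exists i.
by exists M => _ [j Sj <-]; exact: gM.
Qed.

Lemma sup_img_le M : S !=set0 -> (forall i, S i -> g i <= M) ->
  sup [set g i | i in S] <= M.
Proof.
move=> [i0 Si0] gM; apply: ge_sup; first by exists (g i0), i0.
by move=> _ [j Sj <-]; exact: gM.
Qed.

Lemma inf_img_le M : (forall i, S i -> M <= g i) ->
  forall i, S i -> inf [set g i | i in S] <= g i.
Proof.
move=> gM i Si; apply: ge_inf; last by exists i.
by exists M => _ [j Sj <-]; exact: gM.
Qed.

Lemma le_inf_img M : S !=set0 -> (forall i, S i -> M <= g i) ->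
  M <= inf [set g i | i in S].
Proof.
move=> [i0 Si0] gM; apply: lb_le_inf; first by exists (g i0), i0.
by move=> _ [j Sj <-]; exact: gM.
Qed.

Lemma sup_img_adherent M eps : S !=set0 -> (forall i, S i -> g i <= M) ->
  0 < eps -> exists2 i, S i & sup [set g i | i in S] - eps < g i.
Proof.
move=> [i0 Si0] gM eps_gt0.
have [|_ [i Si <-] ?] := sup_adherent eps_gt0 (_ : has_sup [set g i | i in S]).
  split; first by exists (g i0), i0.
  by exists M => _ [j Sj <-]; exact: gM.
by exists i.
Qed.

Lemma inf_img_adherent M eps : S !=set0 -> (forall i, S i -> M <= g i) ->
  0 < eps -> exists2 i, S i & g i < inf [set g i | i in S] + eps.
Proof.
move=> [i0 Si0] gM eps_gt0.
have [|_ [i Si <-] ?] := inf_adherent eps_gt0 (_ : has_inf [set g i | i in S]).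
  split; first by exists (g i0), i0.
  by exists M => _ [j Sj <-]; exact: gM.
by exists i.
Qed.

End SupInfImage.

Lemma inf_sup_le (R : realType) (TA TB : Type) (A : set TA) (B : set TB)
    (g1 g2 : TA -> TB -> R) c M1 M2 :
  A !=set0 -> B !=set0 ->
  (forall a b, A a -> B b -> `|g1 a b| <= M1) ->
  (forall a b, A a -> B b -> g2 a b <= M2) ->
  (forall a b, A a -> B b -> g1 a b <= g2 a b + c) ->
  inf [set sup [set g1 a b | b in B] | a in A] <=
  inf [set sup [set g2 a b | b in B] | a in A] + c.
Proof.
move=> A0 [b0 Bb0] g1_bnd g2_ub g12.
have g1_bnds a b : A a -> B b -> - M1 <= g1 a b /\ g1 a b <= M1.
  by move=> Aa Bb; move: (g1_bnd a b Aa Bb); rewrite ler_norml => /andP.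
have sup1_ge a : A a -> - M1 <= sup [set g1 a b | b in B].
  move=> Aa; apply: le_trans (g1_bnds a b0 Aa Bb0).1 _.
  exact: (le_sup_img (fun b Bb => (g1_bnds a b Aa Bb).2) (i := b0)).
rewrite -lerBlDr; apply: le_inf_img => // a Aa; rewrite lerBlDr.
apply: le_trans (_ : sup [set g1 a b | b in B] <= _).
  exact: inf_img_le sup1_ge _ Aa.
apply: sup_img_le; first by exists b0.
move=> b Bb; apply: le_trans (g12 a b Aa Bb) _; rewrite lerD2r.
exact: le_sup_img (fun b => g2_ub a b Aa) _ Bb.
Qed.

(** * Topical maps *)

Section AlmostAdditive.
Variables (R : realType) (a : nat -> R) (D : R).
Hypothesis a_almost_additive : forall k l, `|a (k + l) - (a k + a l)| <= D.

Let b k := a k + D.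
Let c k := a k - D.

Let D_ge0 : 0 <= D.
Proof. exact: le_trans (a_almost_additive 0 0). Qed.

Let b_mul j k : b (k.+1 * j) <= k.+1%:R * b j.
Proof.
elim: k => [|k IHk]; first by rewrite mul1n mul1r.
have := a_almost_additive j (k.+1 * j); rewrite ler_norml => /andP[_].
by rewrite mulSn -natr1 mulrDl mul1r; move: IHk; rewrite /b; lra.
Qed.

Let c_mul j k : k.+1%:R * c j <= c (k.+1 * j).
Proof.
elim: k => [|k IHk]; first by rewrite mul1n mul1r.
have := a_almost_additive j (k.+1 * j); rewrite ler_norml => /andP[+ _].
by rewrite mulSn -natr1 mulrDl mul1r; move: IHk; rewrite /c; lra.
Qed.

(* [j c(k) <= c(jk) <= b(jk) <= k b(j)] *)
Let c_div_le_b_div j k : c k.+1 / k.+1%:R <= b j.+1 / j.+1%:R.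
Proof.
rewrite ler_pdivrMr // mulrAC ler_pdivlMr // mulrC.
apply: le_trans (c_mul k.+1 j) _; rewrite mulnC mulrC.
by apply: le_trans (b_mul j.+1 k); have := D_ge0; rewrite /b /c; lra.
Qed.

Lemma almost_additive_rate : exists lam, forall k, `|a k - k%:R * lam| <= D.
Proof.
exists (inf [set b j.+1 / j.+1%:R | j in [set: nat]]) => -[|k].
  move: (a_almost_additive 0 0).
  by rewrite mul0r subr0 addn0 opprD addrA subrr add0r normrN.
set lam := inf _.
have lam_le_b : k.+1%:R * lam <= b k.+1.
  rewrite -ler_pdivlMl // mulrC.
  exact: (inf_img_le (fun j _ => c_div_le_b_div j 0) (i := k)).
have c_le_lam : c k.+1 <= k.+1%:R * lam.
  rewrite -ler_pdivrMl // mulrC; apply: le_inf_img => [|j _]; first by exists 0%N.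
  exact: c_div_le_b_div.
by rewrite ler_norml; move: lam_le_b c_le_lam; rewrite /b /c => *; apply/andP; split; lra.
Qed.

End AlmostAdditive.

Section Topical.
Variables (R : realType) (T : choiceType) (Y : set T) (d : T -> T -> R).

Definition lip1 (f : T -> R) := forall x y, Y x -> Y y -> f x - f y <= d x y.

Definition topical (G : (T -> R) -> T -> R) :=
  [/\ forall f, lip1 f -> lip1 (G f),
      forall f g, lip1 f -> lip1 g -> (forall x, Y x -> f x <= g x) ->
        forall x, Y x -> G f x <= G g x
    & forall f c, lip1 f -> forall x, Y x -> G (fun z => f z + c) x = G f x + c].

Definition totally_bounded := forall eps, 0 < eps ->
  exists2 F : {fset T}, [set` F] `<=` Y &
    forall x, Y x -> exists2 p, p \in F & d x p <= eps /\ d p x <= eps.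

Lemma lip1_addr f c : lip1 f -> lip1 (fun z => f z + c).
Proof. by move=> f_lip x y Yx Yy; have := f_lip x y Yx Yy; lra. Qed.

Lemma lip1_sup (I : Type) (S : set I) (f : I -> T -> R) :
  S !=set0 -> (forall i, S i -> lip1 (f i)) ->
  (forall x, Y x -> exists M, forall i, S i -> f i x <= M) ->
  lip1 (fun x => sup [set f i x | i in S]).
Proof.
move=> S0 f_lip f_ub x y Yx Yy; rewrite lerBlDr; apply: sup_img_le => // i Si.
have [M fM] := f_ub y Yy; have := le_sup_img fM Si.
have := f_lip i Si x y Yx Yy; lra.
Qed.

Lemma lip1_inf (I : Type) (S : set I) (f : I -> T -> R) :
  S !=set0 -> (forall i, S i -> lip1 (f i)) ->
  (forall x, Y x -> exists M, forall i, S i -> M <= f i x) ->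
  lip1 (fun x => inf [set f i x | i in S]).
Proof.
move=> S0 f_lip f_lb x y Yx Yy; rewrite lerBlDr addrC -lerBlDr.
apply: le_inf_img => // i Si.
have [M fM] := f_lb x Yx; have := inf_img_le fM Si.
have := f_lip i Si x y Yx Yy; lra.
Qed.

Lemma lip1_dist f x y D : lip1 f -> Y x -> Y y -> d x y <= D -> d y x <= D ->
  `|f x - f y| <= D.
Proof.
move=> f_lip Yx Yy dxy dyx; have := f_lip x y Yx Yy; have := f_lip y x Yy Yx.
by rewrite ler_norml => *; apply/andP; split; lra.
Qed.

Lemma totally_bounded_diameter :
  (forall x y z, Y x -> Y y -> Y z -> d x z <= d x y + d y z) ->
  totally_bounded -> exists D, forall x y, Y x -> Y y -> d x y <= D.
Proof.
move=> d_triangle Y_tb; have [F FY F_net] := Y_tb 1 ltr01.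
pose M := \big[Num.max/0]_(p <- F) \big[Num.max/0]_(q <- F) d p q.
exists (1 + M + 1) => x y Yx Yy.
have [p Fp [dxp _]] := F_net x Yx; have [q Fq [_ dqy]] := F_net y Yy.
have dpq : d p q <= M.
  apply: le_trans (le_bigmax_seq 0 q xpredT (d p) Fq isT) _.
  exact: (le_bigmax_seq 0 p xpredT (fun p => \big[Num.max/0]_(q <- F) d p q) Fp isT).
have := d_triangle x p y Yx (FY p Fp) Yy; have := d_triangle p q y (FY p Fp) (FY q Fq) Yy.
lra.
Qed.

Hypothesis d_ge0 : forall x y, Y x -> Y y -> 0 <= d x y.

Lemma lip1_cst c : lip1 (fun=> c).
Proof. by move=> x y Yx Yy; rewrite subrr; exact: d_ge0. Qed.

(* The extra [2 eps] comes from passing through a point of an [eps]-net. *)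
Lemma lip1_eventually_uniform (A B : nat -> T -> R) eps :
  totally_bounded -> 0 < eps -> (forall j, lip1 (A j)) -> (forall j, lip1 (B j)) ->
  (forall x, Y x -> \forall j \near \oo, A j x <= B j x + eps) ->
  \forall j \near \oo, forall x, Y x -> A j x <= B j x + 3 * eps.
Proof.
move=> Y_tb eps_gt0 A_lip B_lip AB_near.
have [F FY F_net] := Y_tb _ eps_gt0.
have AB_near_net : \forall j \near \oo, forall p, p \in F -> A j p <= B j p + eps.
  by apply: filter_bigI => p Fp; exact: AB_near (FY p Fp).
have [N _ ABN] := AB_near_net; exists N => // j /= Nj x Yx.
have [p Fp [dxp dpx]] := F_net x Yx.
have := ABN j Nj p Fp; have := A_lip j x p Yx (FY p Fp).
have := B_lip j p x (FY p Fp) Yx; lra.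
Qed.

Section TopicalTheory.
Variable G : (T -> R) -> T -> R.
Hypothesis G_top : topical G.

Lemma topical_lip f : lip1 f -> lip1 (G f).
Proof. by case: G_top => G_lip _ _; exact: G_lip. Qed.

Lemma topical_le f g : lip1 f -> lip1 g -> (forall x, Y x -> f x <= g x) ->
  forall x, Y x -> G f x <= G g x.
Proof. by case: G_top => _ G_le _; exact: G_le. Qed.

Lemma topical_addr f c : lip1 f -> forall x, Y x -> G (fun z => f z + c) x = G f x + c.
Proof. by case: G_top => _ _ G_addr; exact: G_addr. Qed.

Lemma topical_eq f g : lip1 f -> lip1 g -> (forall x, Y x -> f x = g x) ->
  forall x, Y x -> G f x = G g x.
Proof.
by move=> f_lip g_lip fg x Yx; apply/le_anti; rewrite !topical_le // => y Yy; rewrite fg.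
Qed.

Lemma topical_le_addr f g c : lip1 f -> lip1 g -> (forall x, Y x -> f x <= g x + c) ->
  forall x, Y x -> G f x <= G g x + c.
Proof.
move=> f_lip g_lip fgc x Yx; rewrite -topical_addr //.
by apply: topical_le => //; exact: lip1_addr.
Qed.

Lemma topical_iter k : topical (iter k G).
Proof.
elim: k => [|k [IHlip IHle IHaddr]]; first by split=> // f c.
split=> [f f_lip|f g f_lip g_lip fg x Yx|f c f_lip x Yx] /=.
- exact/topical_lip/IHlip.
- by apply: topical_le => //; [exact: IHlip | exact: IHlip | exact: IHle].
have iter_lip := IHlip f f_lip; rewrite -topical_addr //.
apply: topical_eq => //; [exact/IHlip/lip1_addr | exact: lip1_addr | exact: IHaddr].
Qed.

End TopicalTheory.

Lemma topical_shift G c : topical G -> topical (fun f x => G f x + c).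
Proof.
move=> G_top; split=> [f f_lip|f g f_lip g_lip fg x Yx|f c' f_lip x Yx].
- exact/lip1_addr/(topical_lip G_top).
- by rewrite lerD2r; exact: (topical_le G_top).
by rewrite (topical_addr G_top) // addrAC.
Qed.

Lemma iter_topical_shift G k c f : topical G -> lip1 f -> forall x, Y x ->
  iter k (fun g x => G g x + c) f x = iter k G f x + k%:R * c.
Proof.
move=> G_top f_lip; elim: k => [|k IHk] x Yx /=; first by rewrite mul0r addr0.
have iter_lip := topical_lip (topical_iter G_top k) f_lip.
have iter_shift_lip := topical_lip (topical_iter (topical_shift c G_top) k) f_lip.
rewrite (topical_eq G_top (g := fun z => iter k G f z + k%:R * c)) //.
- by rewrite (topical_addr G_top) // mulrSr; lra.
exact: lip1_addr.
Qed.

Section FixedPoint.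
Variables (G : (T -> R) -> T -> R) (B : R).
Hypotheses (G_top : topical G) (Y_tb : totally_bounded).
Hypothesis orbit_bounded : forall k x, Y x -> `|iter k G (fun=> 0) x| <= B.

Let w k := iter k G (fun=> 0).

Let w_lip k : lip1 (w k).
Proof. exact/(topical_lip (topical_iter G_top k))/lip1_cst. Qed.

Let w_ge k x : Y x -> - B <= w k x.
Proof. by move=> /(orbit_bounded k); rewrite ler_norml => /andP[]. Qed.

Let w_le k x : Y x -> w k x <= B.
Proof. by move=> /(orbit_bounded k); rewrite ler_norml => /andP[]. Qed.

Let W j x := sup [set w (j + k) x | k in [set: nat]].

Let W_ge j x : Y x -> - B <= W j x.
Proof.
move=> Yx; apply: le_trans (w_ge (j + 0) Yx) _.
exact: (le_sup_img (fun k _ => w_le (j + k) Yx) (i := 0%N)).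
Qed.

Let W_le j x : Y x -> W j x <= B.
Proof. by move=> Yx; apply: sup_img_le => [|k _]; [exists 0%N | exact: w_le]. Qed.

Let W_lip j : lip1 (W j).
Proof.
apply: lip1_sup => [|k _|x Yx]; [by exists 0%N | exact: w_lip |].
by exists B => k _; exact: w_le.
Qed.

Let W_decr i j x : (i <= j)%N -> Y x -> W j x <= W i x.
Proof.
move=> ij Yx; apply: sup_img_le => [|k _]; first by exists 0%N.
rewrite -(subnKC ij) -addnA.
exact: (le_sup_img (fun l _ => w_le (i + l) Yx) (i := (j - i + k)%N)).
Qed.

Let W_succ j x : Y x -> W j.+1 x <= G (W j) x.
Proof.
move=> Yx; apply: sup_img_le => [|k _]; first by exists 0%N.
rewrite addSn /w iterS; apply: (topical_le G_top (w_lip _) (W_lip j)) => // y Yy.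
exact: (le_sup_img (fun l _ => w_le (j + l) Yy) (i := k)).
Qed.

(* [s] is the pointwise limsup of the orbit of [0]. *)
Let s x := inf [set W j x | j in [set: nat]].

Let s_ge x : Y x -> - B <= s x.
Proof. by move=> Yx; apply: le_inf_img => [|j _]; [exists 0%N | exact: W_ge]. Qed.

Let s_le x : Y x -> s x <= B.
Proof.
move=> Yx; apply: le_trans (W_le 0 Yx).
exact: (inf_img_le (fun j _ => W_ge j Yx) (i := 0%N)).
Qed.

Let s_lip : lip1 s.
Proof.
apply: lip1_inf => [|j _|x Yx]; [by exists 0%N | exact: W_lip |].
by exists (- B) => j _; exact: W_ge.
Qed.

Let W_near_s eps : 0 < eps ->
  \forall j \near \oo, forall x, Y x -> W j x <= s x + 3 * eps.
Proof.
move=> eps_gt0.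
apply: (lip1_eventually_uniform Y_tb eps_gt0 W_lip (fun=> s_lip)) => x Yx.
have [j0 _ Wj0] := inf_img_adherent (S := [set: nat]) (ex_intro _ 0%N I)
  (fun j _ => W_ge j Yx) eps_gt0.
by exists j0 => // j /= j0j; exact/(le_trans (W_decr j0j Yx))/ltW.
Qed.

Let s_subsolution x : Y x -> s x <= G s x.
Proof.
move=> Yx; apply/ler_addgt0Pr => eps eps_gt0.
have eps3_gt0 : 0 < eps / 3 by rewrite divr_gt0.
have [j Wj] := filter_ex (W_near_s eps3_gt0).
apply: le_trans (_ : W j.+1 x <= _).
  exact: (inf_img_le (fun i _ => W_ge i Yx) (i := j.+1)).
apply: le_trans (W_succ j Yx) _.
have -> : eps = 3 * (eps / 3) by rewrite mulrC divfK.
exact: topical_le_addr.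
Qed.

(* The iterates of the subsolution [s] increase to a fixed point. *)
Let z k := iter k G s.

Let z_lip k : lip1 (z k).
Proof. exact/(topical_lip (topical_iter G_top k)). Qed.

Let z_succ k x : Y x -> z k x <= z k.+1 x.
Proof.
elim: k x => [|k IHk] x Yx; first exact: s_subsolution.
exact: (topical_le G_top (z_lip k) (z_lip k.+1) IHk).
Qed.

Let z_mono k l x : (k <= l)%N -> Y x -> z k x <= z l x.
Proof.
move=> kl Yx; rewrite -(subnKC kl); elim: (l - k)%N => [|m IHm]; first by rewrite addn0.
by rewrite addnS; apply: le_trans IHm (z_succ _ Yx).
Qed.

Let z_le k x : Y x -> z k x <= B + B.
Proof.
move=> Yx; apply: le_trans (_ : w k x + B <= _); last by rewrite lerD2r w_le.
apply: (topical_le_addr (topical_iter G_top k) s_lip (lip1_cst 0)) => // y Yy.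
by rewrite add0r s_le.
Qed.

Let zsup x := sup [set z k x | k in [set: nat]].

Let z_le_zsup k x : Y x -> z k x <= zsup x.
Proof. by move=> Yx; exact: (le_sup_img (fun l _ => z_le l Yx) (i := k)). Qed.

Let zsup_lip : lip1 zsup.
Proof.
apply: lip1_sup => [|k _|x Yx]; [by exists 0%N | exact: z_lip |].
by exists (B + B) => k _; exact: z_le.
Qed.

Let zsup_near_z eps : 0 < eps ->
  \forall k \near \oo, forall x, Y x -> zsup x <= z k x + 3 * eps.
Proof.
move=> eps_gt0.
apply: (lip1_eventually_uniform Y_tb eps_gt0 (fun=> zsup_lip) z_lip) => x Yx.
have [k0 _ zk0] := sup_img_adherent (S := [set: nat]) (ex_intro _ 0%N I)
  (fun k _ => z_le k Yx) eps_gt0.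
exists k0 => // k /= k0k; move: zk0 (z_mono k0k Yx); rewrite /zsup; lra.
Qed.

Lemma topical_fixpoint : exists v, lip1 v /\ forall x, Y x -> G v x = v x.
Proof.
exists zsup; split=> // x Yx; apply/le_anti/andP; split; last first.
  apply: sup_img_le => [|k _]; first by exists 0%N.
  apply: le_trans (z_succ k Yx) _.
  by apply: (topical_le G_top (z_lip k) zsup_lip) => // y; exact: z_le_zsup.
apply/ler_addgt0Pr => eps eps_gt0.
have eps3_gt0 : 0 < eps / 3 by rewrite divr_gt0.
have [k zk] := filter_ex (zsup_near_z eps3_gt0).
have -> : eps = 3 * (eps / 3) by rewrite mulrC divfK.
apply: le_trans (topical_le_addr G_top zsup_lip (z_lip k) zk Yx) _.
by rewrite lerD2r; exact: (z_le_zsup k.+1 Yx).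
Qed.

End FixedPoint.

Lemma topical_eigenvector G D y0 : topical G -> totally_bounded -> Y y0 ->
  (forall x y, Y x -> Y y -> d x y <= D) ->
  exists lam v, lip1 v /\ forall x, Y x -> G v x = lam + v x.
Proof.
move=> G_top Y_tb Yy0 d_le.
pose u k := iter k G (fun=> 0).
have u_lip k : lip1 (u k) by exact/(topical_lip (topical_iter G_top k))/lip1_cst.
have u_near k x : Y x -> `|u k x - u k y0| <= D.
  by move=> Yx; apply: lip1_dist => //; exact: d_le.
(* [u (k + l) = G^k (u l)] and [u l] is within [D] of the constant [u l y0]. *)
have u_almost_additive k l : `|u (k + l)%N y0 - (u k y0 + u l y0)| <= D.
  have ul_near y : Y y -> u l y0 - D <= u l y /\ u l y <= u l y0 + D.
    by move=> /(u_near l); rewrite ler_norml => /andP[? ?]; split; lra.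
  have Gk := topical_iter G_top k.
  have -> : u (k + l)%N = iter k G (u l) by rewrite /u iterD.
  have ukl_le : iter k G (u l) y0 <= u k y0 + (u l y0 + D).
    apply: (topical_le_addr Gk (u_lip l) (lip1_cst 0)) => // y Yy /=.
    by case: (ul_near y Yy) => ? ?; lra.
  have uk_le : u k y0 <= iter k G (u l) y0 + (D - u l y0).
    apply: (topical_le_addr Gk (lip1_cst 0) (u_lip l)) => // y Yy /=.
    by case: (ul_near y Yy) => ? ?; lra.
  by rewrite ler_norml; apply/andP; split; lra.
have [lam u_lam] := almost_additive_rate u_almost_additive.
have [|v [v_lip Gv]] := topical_fixpoint (B := D + D) (topical_shift (- lam) G_top) Y_tb.
  move=> k x Yx; rewrite iter_topical_shift ?mulrN //; last exact: lip1_cst.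
  by apply: le_trans (ler_distD (u k y0) _ _) _; rewrite lerD ?u_near // distrC.
by exists lam, v; split=> // x Yx; rewrite -(Gv x Yx) addrC subrK.
Qed.

End Topical.

Lemma compact_totally_bounded (R : realType) (T : ptopologicalType) (Y : set T)
    (d : T -> T -> R) :
  compact Y ->
  (forall x eps, Y x -> 0 < eps -> \forall y \near x, Y y -> d x y <= eps /\ d y x <= eps) ->
  totally_bounded Y d.
Proof.
move=> Y_compact d_near eps eps_gt0.
pose U x := interior [set y | Y y -> d x y <= eps /\ d y x <= eps].
have U_open x : Y x -> open (U x) by move=> _; exact: open_interior.
have Y_cover : Y `<=` \bigcup_(x in Y) U x.
  by move=> x Yx; exists x => //; exact: d_near.
move: Y_compact; rewrite compact_cover => /(_ T Y U U_open Y_cover)[F FY YF].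
exists F; first by move=> p /FY; rewrite in_setE.
move=> x Yx; have [p Fp /interior_subset Up] := YF x Yx.
by exists p => //; have [] := Up Yx.
Qed.

Section Dotp.
Variables (R : realType) (n : nat).
Implicit Types x y z : 'rV[R]_n.

Lemma dotpDl x y z : dotp (x + y) z = dotp x z + dotp y z.
Proof. by rewrite /dotp -big_split; apply: eq_bigr => i _; rewrite !mxE mulrDl. Qed.

Lemma dotpZl a x z : dotp (a *: x) z = a * dotp x z.
Proof. by rewrite /dotp mulr_sumr; apply: eq_bigr => i _; rewrite !mxE mulrA. Qed.

Lemma dotpBl x y z : dotp (x - y) z = dotp x z - dotp y z.
Proof. by rewrite dotpDl -scaleN1r dotpZl mulN1r. Qed.

Lemma dotpDr x y z : dotp x (y + z) = dotp x y + dotp x z.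
Proof. by rewrite /dotp -big_split; apply: eq_bigr => i _; rewrite !mxE mulrDr. Qed.

Lemma dotpZr a x z : dotp x (a *: z) = a * dotp x z.
Proof. by rewrite /dotp mulr_sumr; apply: eq_bigr => i _; rewrite !mxE mulrCA. Qed.

Lemma dotp_continuous z : continuous (fun x => dotp x z).
Proof.
apply: (continuous_big add_continuous) => i _ x.
by apply: continuousM; [exact: coord_continuous | exact: cst_continuous].
Qed.

End Dotp.

(** * The Funk hemi-metric *)

Definition dominating_scalars (R : realType) (n : nat) (C : set 'rV[R]_n)
    (x y : 'rV[R]_n) :=
  [set l : R | 0 < l /\ C (l *: y - x)].

Lemma interior_normP (R : realType) (n : nat) (A : set 'rV[R]_n) p :
  interior A p <-> exists2 r : R, 0 < r & forall q, `|p - q| < r -> A q.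
Proof.
split=> [/nbhs_ballP[r r_gt0 Ar]|[r r_gt0 Ar]].
  by exists r => // q pq; apply: Ar; rewrite -ball_normE.
by apply/nbhs_ballP; exists r => // q; rewrite -ball_normE; exact: Ar.
Qed.

Section ConvexCone.
Variables (R : realType) (n : nat) (C : set 'rV[R]_n).
Hypothesis C_cone : is_convex_cone C.

Lemma cone0 : C 0.
Proof. by case: C_cone. Qed.

Lemma coneD x y : C x -> C y -> C (x + y).
Proof. by case: C_cone => _ + _; apply. Qed.

Lemma coneZ t x : 0 <= t -> C x -> C (t *: x).
Proof. by case: C_cone => _ _; apply. Qed.

Lemma interior_coneZ s p : 0 < s -> interior C p -> interior C (s *: p).
Proof.
move=> s_gt0 /interior_normP[r r_gt0 Cr]; apply/interior_normP.
exists (s * r) => [|q pq]; first exact: mulr_gt0.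
rewrite -[q](scalerKV (lt0r_neq0 s_gt0)).
apply: coneZ; first exact: ltW.
apply: Cr; rewrite -[p](scalerK (lt0r_neq0 s_gt0)) -scalerBr normrZ.
by rewrite gtr0_norm ?invr_gt0 // ltr_pdivrMl.
Qed.

Lemma interior_coneD u p : C u -> interior C p -> interior C (u + p).
Proof.
move=> Cu /interior_normP[r r_gt0 Cr]; apply/interior_normP; exists r => // q upq.
rewrite -(subrK u q) addrC; apply: coneD => //.
by apply: Cr; rewrite opprB addrCA addrA.
Qed.

End ConvexCone.

Section Funk.
Variables (R : realType) (n : nat) (C : set 'rV[R]_n) (e : 'rV[R]_n).
Hypotheses (C_cone : is_convex_cone C) (e_dual : dual_cone C e).
Local Notation Delta := (simplex C e).
Local Notation dom := (dominating_scalars C).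

Lemma FunkE x y : Funk C x y = ln (inf (dom x y)).
Proof. by []. Qed.

Lemma dominating_scalars_ge1 x y l : Delta x -> Delta y -> dom x y l -> 1 <= l.
Proof.
move=> [_ ex] [_ ey] [_ Cl]; have := e_dual Cl.
by rewrite dotpBl dotpZl ex ey mulr1 subr_ge0.
Qed.

Lemma inf_dominating_scalars_ge1 x y : Delta x -> Delta y -> dom x y !=set0 ->
  1 <= inf (dom x y).
Proof.
by move=> Dx Dy dom_x_y; apply: lb_le_inf => // l; exact: dominating_scalars_ge1.
Qed.

Lemma inf_dominating_scalars_le x y l : dom x y l -> inf (dom x y) <= l.
Proof. by move=> xy_l; apply: ge_inf => //; exists 0 => k [/ltW]. Qed.

(* With [dom x y] empty, [Funk C x y = ln (inf set0) = ln 0 = 0]. *)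
Lemma Funk_ge0 x y : Delta x -> Delta y -> 0 <= Funk C x y.
Proof.
move=> Dx Dy; have [dom_x_y|] := pselect (dom x y !=set0).
  exact/ln_ge0/inf_dominating_scalars_ge1.
by move/nonemptyPn; rewrite FunkE => ->; rewrite inf0 ln0.
Qed.

Lemma Funk_le_ln x y l : Delta x -> Delta y -> dom x y l -> Funk C x y <= ln l.
Proof.
move=> Dx Dy xy_l; have l_ge1 := dominating_scalars_ge1 Dx Dy xy_l.
have inf_ge1 := inf_dominating_scalars_ge1 Dx Dy (ex_intro _ l xy_l).
rewrite ler_ln ?posrE ?(lt_le_trans ltr01) //; exact: inf_dominating_scalars_le.
Qed.

Lemma Funk_id x : Delta x -> Funk C x x = 0.
Proof.
move=> Dx; apply/le_anti; rewrite Funk_ge0 // andbT -ln1.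
by apply: Funk_le_ln => //; split; rewrite ?scale1r ?subrr //; exact: cone0.
Qed.

Lemma dominating_scalarsM x y z l1 l2 : dom x y l1 -> dom y z l2 -> dom x z (l1 * l2).
Proof.
move=> [l1_gt0 C1] [l2_gt0 C2]; split; first exact: mulr_gt0.
have -> : (l1 * l2) *: z - x = l1 *: (l2 *: z - y) + (l1 *: y - x).
  by apply/rowP => i; rewrite !mxE; ring.
by apply: coneD => //; apply: coneZ => //; exact: ltW.
Qed.

Lemma Funk_triangle x y z : Delta x -> Delta y -> Delta z ->
  dom x y !=set0 -> dom y z !=set0 -> Funk C x z <= Funk C x y + Funk C y z.
Proof.
move=> Dx Dy Dz [l1 xy_l1] [l2 yz_l2].
have dom_x_z : dom x z !=set0 by exists (l1 * l2); exact: dominating_scalarsM xy_l1 yz_l2.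
have A_ge1 := inf_dominating_scalars_ge1 Dx Dy (ex_intro _ _ xy_l1).
have B_ge1 := inf_dominating_scalars_ge1 Dy Dz (ex_intro _ _ yz_l2).
have I_ge1 := inf_dominating_scalars_ge1 Dx Dz dom_x_z.
set A := inf (dom x y) in A_ge1 *; set B := inf (dom y z) in B_ge1 *.
set I := inf (dom x z) in I_ge1 *.
have A_gt0 : 0 < A := lt_le_trans ltr01 A_ge1.
have B_gt0 : 0 < B := lt_le_trans ltr01 B_ge1.
have I_le_AB : I <= A * B.
  rewrite -ler_pdivrMl // mulrC; apply: lb_le_inf; first by exists l2.
  move=> m2 yz_m2; have m2_gt0 : 0 < m2 by case: yz_m2.
  rewrite ler_pdivrMr // mulrC -ler_pdivrMr //; apply: lb_le_inf; first by exists l1.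
  move=> m1 xy_m1; rewrite ler_pdivrMr // mulrC.
  by apply: inf_dominating_scalars_le; rewrite mulrC; exact: dominating_scalarsM xy_m1 yz_m2.
rewrite !FunkE -/A -/B -/I -lnM ?posrE // ler_ln ?posrE ?mulr_gt0 //.
exact: lt_le_trans ltr01 I_ge1.
Qed.

Lemma Funk_scale_lb x y (a b : R) : Delta x -> Delta y -> dom x y !=set0 ->
  0 < a -> 0 < b -> Funk C x y + ln a - ln b <= Funk C (a *: x) (b *: y).
Proof.
move=> Dx Dy [l xy_l] a_gt0 b_gt0.
have unscale m : dom (a *: x) (b *: y) m -> dom x y (m * b / a).
  move=> [m_gt0 Cm]; split; first by rewrite divr_gt0 // mulr_gt0.
  have -> : (m * b / a) *: y - x = a^-1 *: (m *: (b *: y) - a *: x).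
    by apply/rowP => i; rewrite !mxE; field; exact: lt0r_neq0.
  by apply: coneZ => //; rewrite invr_ge0 ltW.
have dom_ab : dom (a *: x) (b *: y) (l * a / b).
  case: xy_l => l_gt0 Cl; split; first by rewrite divr_gt0 // mulr_gt0.
  have -> : (l * a / b) *: (b *: y) - a *: x = a *: (l *: y - x).
    by apply/rowP => i; rewrite !mxE; field; exact: lt0r_neq0.
  by apply: coneZ => //; exact: ltW.
have I_ge1 := inf_dominating_scalars_ge1 Dx Dy (ex_intro _ _ xy_l).
set I := inf (dom x y) in I_ge1 *; set J := inf (dom (a *: x) (b *: y)).
have I_gt0 : 0 < I := lt_le_trans ltr01 I_ge1.
have abI_gt0 : 0 < a / b * I by rewrite !mulr_gt0 ?invr_gt0.
have abI_le_J : a / b * I <= J.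
  apply: lb_le_inf; first by exists (l * a / b).
  move=> m /unscale /inf_dominating_scalars_le; rewrite -/I => I_le.
  rewrite -ler_pdivlMl ?divr_gt0 //; apply: le_trans I_le _.
  by rewrite invf_div -mulrA mulrC.
have -> : ln I + ln a - ln b = ln (a / b * I).
  by rewrite lnM ?posrE ?divr_gt0 // ln_div ?posrE //; ring.
by rewrite FunkE ler_ln ?posrE ?(lt_le_trans abI_gt0).
Qed.

Lemma relint_simplex_segment c : relint Delta c ->
  exists2 eps : R, 0 < eps & forall w (t : R), Delta w ->
    `|t| * `|w - c| < eps -> Delta (c + t *: (w - c)).
Proof.
move=> [Dc [eps eps_gt0 Deps]]; exists eps => // w t Dw t_small; apply: Deps.
  by move=> A A_aff DA; apply: A_aff; apply: DA.
by rewrite -ball_normE /ball_ /= opprD addrA subrr add0r normrN normrZ.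
Qed.

Lemma dominating_scalars_relint x y : Delta x -> relint Delta y -> dom x y !=set0.
Proof.
move=> Dx /relint_simplex_segment[eps eps_gt0 Deps].
pose t := eps / (`|x - y| + 1); have norm_gt0 : 0 < `|x - y| + 1 by rewrite ltr_wpDl.
have t_gt0 : 0 < t by rewrite divr_gt0.
have [Cz _] : Delta (y + (- t) *: (x - y)).
  apply: Deps => //; rewrite normrN gtr0_norm // /t mulrAC ltr_pdivrMr //.
  by rewrite ltr_pM2l // ltrDl.
exists ((1 + t) / t); split; first by rewrite divr_gt0 // addr_gt0.
have -> : ((1 + t) / t) *: y - x = t^-1 *: (y + (- t) *: (x - y)).
  by apply/rowP => i; rewrite !mxE; field; exact: lt0r_neq0.
by apply: coneZ; rewrite ?invr_ge0 ?ltW.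
Qed.

End Funk.

Section Simplex.
Variables (R : realType) (n : nat) (C : set 'rV[R]_n) (e : 'rV[R]_n).
Hypotheses (C_cone : is_convex_cone C) (e_dual : dual_cone C e).
Local Notation Delta := (simplex C e).

Lemma dotp_interior_gt0 x0 p : Delta x0 -> interior C p -> 0 < dotp p e.
Proof.
move=> [Cx0 ex0] /interior_normP[r r_gt0 Cr].
pose t := r / (`|x0| + 1); have norm_gt0 : 0 < `|x0| + 1 by rewrite ltr_wpDl.
have t_gt0 : 0 < t by rewrite divr_gt0.
have /e_dual : C (p - t *: x0).
  apply: Cr; rewrite opprB addrC subrK normrZ gtr0_norm // /t mulrAC.
  by rewrite ltr_pdivrMr // ltr_pM2l // ltrDl.
by rewrite dotpBl dotpZl ex0 mulr1 subr_ge0; exact: lt_le_trans.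
Qed.

(* [x] lies strictly inside the segment from an interior point [c'] of
   [Delta] to a point of [Delta] beyond [x]. *)
Lemma relint_simplex_interior : interior C !=set0 -> relint Delta `<=` interior C.
Proof.
move=> [c Cc] x Rx; have [Dx _] := Rx.
have c_gt0 := dotp_interior_gt0 Dx Cc.
pose c' := (dotp c e)^-1 *: c.
have c'_int : interior C c' by apply: (interior_coneZ C_cone) Cc; rewrite invr_gt0.
have Dc' : Delta c' by split; [exact: interior_subset | rewrite dotpZl mulVf ?lt0r_neq0].
have [eps eps_gt0 Deps] := relint_simplex_segment Rx.
pose t := eps / (`|c' - x| + 1); have norm_gt0 : 0 < `|c' - x| + 1 by rewrite ltr_wpDl.
have t_gt0 : 0 < t by rewrite divr_gt0.
have [Cz _] : Delta (x + (- t) *: (c' - x)).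
  apply: Deps => //; rewrite normrN gtr0_norm // /t mulrAC ltr_pdivrMr //.
  by rewrite ltr_pM2l // ltrDl.
have -> : x = (1 + t)^-1 *: (x + (- t) *: (c' - x)) + (t / (1 + t)) *: c'.
  apply/rowP => i; rewrite !mxE; field.
  by rewrite !lt0r_neq0 ?addr_gt0.
apply: (interior_coneD C_cone).
  by apply: (coneZ C_cone) Cz; rewrite invr_ge0 addr_ge0 // ltW.
by apply: (interior_coneZ C_cone) c'_int; rewrite divr_gt0 // addr_gt0.
Qed.

(* Perturbing [e] along a coordinate axis stays in the dual cone, which bounds
   that coordinate on [Delta]. *)
Lemma simplex_coord_bounded : interior (dual_cone C) e ->
  exists M : R, forall x, Delta x -> forall i, `|x ord0 i| <= M.
Proof.
move=> /nbhs_ballP[r r_gt0 e_int]; pose s := r / 2.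
have s_gt0 : 0 < s by rewrite divr_gt0.
exists s^-1 => x [Cx ex] i; pose u := \row_(j < n) ((j == i)%:R : R).
have xu : dotp x u = x ord0 i.
  rewrite /dotp (bigD1 i) //= big1 ?addr0; first by rewrite mxE eqxx mulr1.
  by move=> j /negbTE ji; rewrite mxE ji mulr0.
have shift_ge0 t : `|t| <= s -> 0 <= 1 + t * x ord0 i.
  move=> t_small; rewrite -ex -xu -dotpZr -dotpDr; apply: e_int => //.
  split=> // a b; rewrite !mxE /ball /= opprD addrA subrr add0r normrN normrM.
  apply: le_lt_trans (_ : `|t| * 1 < _).
    by rewrite ler_wpM2l //; case: (b == i); rewrite normr_nat ?ler01.
  by rewrite mulr1 (le_lt_trans t_small) // /s ltr_pdivrMr // ltr_pMr // ltr1n.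
have := shift_ge0 s; have := shift_ge0 (- s); rewrite normrN gtr0_norm // mulNr.
move=> /(_ (lexx _)) x_le /(_ (lexx _)) x_ge.
have sx_le1 : `|s * x ord0 i| <= 1 by rewrite ler_norml; apply/andP; split; lra.
by rewrite -[s^-1]mulr1 ler_pdivlMl // -[s]gtr0_norm // -normrM.
Qed.

Lemma simplex_closed : closed C -> closed Delta.
Proof.
move=> C_closed; apply: closedI => //.
apply: (@preimage_closed _ _ (fun x => dotp x e) [set 1]); last exact: closed_eq.
by move=> x _; exact: dotp_continuous.
Qed.

Lemma simplex_compact : closed C -> interior (dual_cone C) e -> compact Delta.
Proof.
move=> C_closed /simplex_coord_bounded[M coordM].
have box_compact : compact [set x : 'rV[R]_n | forall i, x ord0 i \in `[- M, M]].
  by apply: (@rV_compact _ _ (fun=> `[- M, M]%classic)) => _; exact: segment_compact.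
apply: subclosed_compact (simplex_closed C_closed) box_compact _.
by move=> x Dx i /=; rewrite in_itv /= -ler_norml; exact: coordM.
Qed.

Lemma Funk_near x eps : relint Delta x -> 0 < eps ->
  \forall y \near x, Delta y -> Funk C x y <= eps /\ Funk C y x <= eps.
Proof.
move=> Rx eps_gt0; have [Dx _] := Rx.
have [del del_gt0 Ddel] := relint_simplex_segment Rx.
pose t := 1 + eps^-1; have t_gt0 : 0 < t by rewrite addr_gt0 // invr_gt0.
apply/nbhs_normP; exists (del / t); first exact: divr_gt0.
move=> y /= xy Dy.
have Dext tau : `|tau| = t -> Delta (x + tau *: (y - x)).
  by move=> tau_t; apply: Ddel => //; rewrite tau_t distrC -ltr_pdivlMl // mulrC.
split.
  have [Cz _] := Dext t (gtr0_norm t_gt0).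
  apply: le_trans (_ : ln (1 + eps) <= _); last exact/le_ln1Dx/(lt_trans (ltrN10 R)).
  apply: (Funk_le_ln e_dual) => //; split; first by rewrite addr_gt0.
  have -> : (1 + eps) *: y - x = eps *: (x + t *: (y - x)).
    by apply/rowP => i; rewrite !mxE /t; field; rewrite lt0r_neq0.
  by apply: (coneZ C_cone) => //; exact: ltW.
have [Cz _] := Dext (- t) ltac:(by rewrite normrN gtr0_norm).
have tV_gt0 : 0 < t^-1 by rewrite invr_gt0.
apply: le_trans (_ : ln (1 + t^-1) <= _).
  apply: (Funk_le_ln e_dual) => //; split; first by rewrite addr_gt0.
  have -> : (1 + t^-1) *: x - y = t^-1 *: (x + (- t) *: (y - x)).
    by apply/rowP => i; rewrite !mxE; field; rewrite lt0r_neq0.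
  by apply: (coneZ C_cone) => //; exact: ltW.
apply: le_trans (_ : t^-1 <= _); first exact/le_ln1Dx/(lt_trans (ltrN10 R)).
rewrite -[t^-1]mul1r ler_pdivrMr // /t mulrDr mulr1 mulfV ?lt0r_neq0 // lerDr; exact: ltW.
Qed.

End Simplex.

(** * Shapley operators under the small cone assumption *)

Section SmallCone.
Variables (R : realType) (n : nat) (C : set 'rV[R]_n) (e : 'rV[R]_n).
Variable K : set 'rV[R]_n.
Hypotheses (C_closed : closed C) (C_cone : is_convex_cone C) (C_int : interior C !=set0).
Hypotheses (e_int : interior (dual_cone C) e) (K_closed : closed K) (K_cone : is_cone K).
Local Notation Delta := (simplex C e).
Let X := K `&` Delta.
Hypotheses (X_relint : X `<=` relint Delta) (X0 : X !=set0).

Let e_dual : dual_cone C e.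
Proof. exact: interior_subset. Qed.

Lemma small_cone_interior : X `<=` interior C.
Proof. by move=> x /X_relint; exact: (relint_simplex_interior C_cone e_dual C_int). Qed.

Lemma Funk_small_cone_ge0 x y : X x -> X y -> 0 <= Funk C x y.
Proof. by move=> [_ Dx] [_ Dy]; exact: (Funk_ge0 e_dual). Qed.

Lemma Funk_small_cone_triangle x y z : X x -> X y -> X z ->
  Funk C x z <= Funk C x y + Funk C y z.
Proof.
move=> [_ Dx] /[dup] Xy [_ Dy] /[dup] Xz [_ Dz].
apply: (Funk_triangle C_cone e_dual) => //.
  exact: (dominating_scalars_relint C_cone Dx (X_relint Xy)).
exact: (dominating_scalars_relint C_cone Dy (X_relint Xz)).
Qed.

Lemma small_cone_totally_bounded : totally_bounded X (Funk C).
Proof.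
apply: compact_totally_bounded => [|x eps Xx eps_gt0].
  apply: subclosed_compact (simplex_compact C_closed e_int) _; last by move=> ? [].
  exact: closedI K_closed (simplex_closed C_closed).
move: (Funk_near C_cone e_dual (X_relint Xx) eps_gt0); apply: filterS => y near_y [_ Dy].
exact: near_y.
Qed.

Lemma small_cone_diameter : exists D, forall x y, X x -> X y -> Funk C x y <= D.
Proof.
exact: totally_bounded_diameter Funk_small_cone_triangle small_cone_totally_bounded.
Qed.

Lemma lip1_distance_like (Y : set 'rV[R]_n) v : Y `<=` X -> Y !=set0 ->
  lip1 Y (Funk C) v -> distance_like C Y v.
Proof.
move=> YX [y0 Yy0] v_lip; have [D Funk_le] := small_cone_diameter.
exists y0 => //; exists (v y0 - D - D) => x Yx.
have := Funk_le x y0 (YX x Yx) (YX y0 Yy0); have := Funk_le y0 x (YX y0 Yy0) (YX x Yx).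
have := v_lip y0 x Yy0 Yx; lra.
Qed.

Variables (TA TB : topologicalType) (A : set TA) (B : set TB).
Variable T : TA -> TB -> 'rV[R]_n -> 'rV[R]_n.
Hypotheses (A0 : A !=set0) (B0 : B !=set0).
Hypothesis T_int : forall a b x, A a -> B b -> interior C x -> interior C (T a b x).
Hypothesis T_Funk : forall a b x y, A a -> B b -> interior C x -> interior C y ->
  Funk C (T a b x) (T a b y) <= Funk C x y.
Hypothesis T_compact : forall Kc : set 'rV[R]_n, compact Kc -> Kc `<=` interior C ->
  compact [set T p.1.1 p.1.2 p.2 | p in (A `*` B) `*` Kc].
Hypothesis T_K : forall a b x, A a -> B b -> K x -> K (T a b x).

Local Notation F := (Fop A B T e).
Local Notation lip1X := (lip1 X (Funk C)).

Let T_interior a b x : A a -> B b -> X x -> interior C (T a b x).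
Proof. by move=> Aa Bb /small_cone_interior Cx; exact: T_int. Qed.

Let Tx_gt0 a b x : A a -> B b -> X x -> 0 < dotp (T a b x) e.
Proof.
move=> Aa Bb Xx; have [x0 [_ Dx0]] := X0.
exact: dotp_interior_gt0 Dx0 (T_interior Aa Bb Xx).
Qed.

Let T_normalized a b x : A a -> B b -> X x -> X ((dotp (T a b x) e)^-1 *: T a b x).
Proof.
move=> Aa Bb /[dup] Xx [Kx _]; have Tx_pos := Tx_gt0 Aa Bb Xx.
have Tx_int := T_interior Aa Bb Xx; have TxV_ge0 : 0 <= (dotp (T a b x) e)^-1.
  by rewrite invr_ge0 ltW.
have [_ K_scale] := K_cone; split; first by apply: K_scale => //; exact: T_K.
split; first exact: coneZ C_cone _ _ TxV_ge0 (interior_subset Tx_int).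
by rewrite dotpZl mulVf ?lt0r_neq0.
Qed.

Let log_dotp_T_bounded x : X x ->
  exists M, forall a b, A a -> B b -> `|ln (dotp (T a b x) e)| <= M.
Proof.
move=> Xx; pose P := [set T p.1.1 p.1.2 p.2 | p in (A `*` B) `*` [set x]].
have P_compact : compact P.
  by apply: T_compact; [exact: compact_set1 | move=> y ->; exact: small_cone_interior].
have P_pos q : P q -> 0 < dotp q e by move=> [[[a b] y] [[/= Aa Bb] ->] <-]; exact: Tx_gt0.
have log_cont : {within P, continuous (fun q => ln (dotp q e))}.
  apply: continuous_in_subspaceT => q; rewrite in_setE => /P_pos q_pos.
  by apply: continuous_comp; [exact: dotp_continuous | exact: continuous_ln].
have [M [_ PM]] := compact_bounded (continuous_compact log_cont P_compact).
exists (M + 1) => a b Aa Bb; apply: PM; first by rewrite ltrDl.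
by exists (T a b x) => //; exists (a, b, x).
Qed.

Let lip1X_bounded v : lip1X v -> exists M, forall x, X x -> `|v x| <= M.
Proof.
move=> v_lip; have [x0 Xx0] := X0; have [D Funk_le] := small_cone_diameter.
exists (`|v x0| + D) => x Xx; rewrite -[v x](subrK (v x0)).
apply: le_trans (ler_normD _ _) _; rewrite addrC lerD2l.
exact: lip1_dist v_lip Xx Xx0 (Funk_le _ _ Xx Xx0) (Funk_le _ _ Xx0 Xx).
Qed.

Let Fterm v a b x := ln (dotp (T a b x) e) + v ((dotp (T a b x) e)^-1 *: T a b x).

Let Fterm_bounded v x : lip1X v -> X x ->
  exists M, forall a b, A a -> B b -> `|Fterm v a b x| <= M.
Proof.
move=> v_lip Xx; have [L L_bnd] := log_dotp_T_bounded Xx.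
have [M M_bnd] := lip1X_bounded v_lip.
exists (L + M) => a b Aa Bb; apply: le_trans (ler_normD _ _) _.
by rewrite lerD ?L_bnd ?M_bnd //; exact: T_normalized.
Qed.

Let Fterm_lip v a b x y : lip1X v -> A a -> B b -> X x -> X y ->
  Fterm v a b x <= Fterm v a b y + Funk C x y.
Proof.
move=> v_lip Aa Bb Xx Xy.
have Tx_pos := Tx_gt0 Aa Bb Xx; have Ty_pos := Tx_gt0 Aa Bb Xy.
have Xx' := T_normalized Aa Bb Xx; have Xy' := T_normalized Aa Bb Xy.
have v_le := v_lip _ _ Xx' Xy'.
have dom_xy' := dominating_scalars_relint C_cone Xx'.2 (X_relint Xy').
have := Funk_scale_lb C_cone e_dual Xx'.2 Xy'.2 dom_xy' Tx_pos Ty_pos.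
rewrite !scalerA !mulfV ?lt0r_neq0 // !scale1r.
have := T_Funk Aa Bb (small_cone_interior Xx) (small_cone_interior Xy).
rewrite /Fterm; lra.
Qed.

Lemma Fop_topical : topical X (Funk C) F.
Proof.
split=> [v v_lip x y Xx Xy|v w v_lip w_lip vw x Xx|v c v_lip x Xx].
- have [Mx Mx_bnd] := Fterm_bounded v_lip Xx.
  have [My My_bnd] := Fterm_bounded v_lip Xy.
  rewrite lerBlDl; apply: (inf_sup_le A0 B0 Mx_bnd) => a b Aa Bb.
    exact: le_trans (ler_norm _) (My_bnd a b Aa Bb).
  exact: Fterm_lip.
- have [Mv Mv_bnd] := Fterm_bounded v_lip Xx.
  have [Mw Mw_bnd] := Fterm_bounded w_lip Xx.
  rewrite -[F w x]addr0; apply: (inf_sup_le A0 B0 Mv_bnd) => a b Aa Bb.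
    exact: le_trans (ler_norm _) (Mw_bnd a b Aa Bb).
  by rewrite addr0 lerD2l; apply: vw; exact: T_normalized.
have vc_lip : lip1X (fun z => v z + c) by exact: lip1_addr.
have [Mv Mv_bnd] := Fterm_bounded v_lip Xx.
have [Mvc Mvc_bnd] := Fterm_bounded vc_lip Xx.
apply/le_anti/andP; split.
  apply: (inf_sup_le A0 B0 Mvc_bnd) => a b Aa Bb.
    exact: le_trans (ler_norm _) (Mv_bnd a b Aa Bb).
  by rewrite /Fterm addrA.
rewrite -lerBrDr; apply: (inf_sup_le A0 B0 Mv_bnd) => a b Aa Bb.
  exact: le_trans (ler_norm _) (Mvc_bnd a b Aa Bb).
by rewrite /Fterm addrA addrK.
Qed.

Variable Xh : set 'rV[R]_n.
Hypotheses (Xh_X : Xh `<=` X) (Xh0 : Xh !=set0) (Xh_finite : finite_set Xh).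
Local Notation lip1Xh := (lip1 Xh (Funk C)).
Local Notation Ih := (Iplus C Xh).

Let Iplus_lb w x : lip1Xh w -> X x ->
  exists m, forall y, Xh y -> m <= w y + Funk C x y.
Proof.
move=> w_lip Xx; have [y0 Xhy0] := Xh0; have [D Funk_le] := small_cone_diameter.
exists (w y0 - D) => y Xhy; have := Funk_small_cone_ge0 Xx (Xh_X Xhy).
have := w_lip y0 y Xhy0 Xhy; have := Funk_le y0 y (Xh_X Xhy0) (Xh_X Xhy); lra.
Qed.

Lemma Iplus_lip w : lip1Xh w -> lip1X (Ih w).
Proof.
move=> w_lip; apply: (lip1_inf Xh0) => [y Xhy x x' Xx Xx'|x Xx]; last exact: Iplus_lb.
have := Funk_small_cone_triangle Xx Xx' (Xh_X Xhy); lra.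
Qed.

Lemma Iplus_le w w' : lip1Xh w -> (forall y, Xh y -> w y <= w' y) ->
  forall x, X x -> Ih w x <= Ih w' x.
Proof.
move=> w_lip ww' x Xx; have [m m_le] := Iplus_lb w_lip Xx.
apply: le_inf_img => // y Xhy; apply: le_trans (inf_img_le m_le Xhy) _.
by rewrite lerD2r; exact: ww'.
Qed.

Lemma Iplus_addr w c : lip1Xh w ->
  forall x, X x -> Ih (fun z => w z + c) x = Ih w x + c.
Proof.
move=> w_lip x Xx; have [m m_le] := Iplus_lb w_lip Xx.
have wc_lip : lip1Xh (fun z => w z + c) by exact: lip1_addr.
have [mc mc_le] := Iplus_lb wc_lip Xx.
apply/le_anti/andP; split.
  rewrite -lerBlDr; apply: le_inf_img => // y Xhy; rewrite lerBlDr.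
  by apply: le_trans (inf_img_le mc_le Xhy) _; rewrite addrAC.
apply: le_inf_img => // y Xhy; rewrite addrAC lerD2r.
exact: (inf_img_le m_le Xhy).
Qed.

Lemma Iplus_eq w w' : (forall y, Xh y -> w y = w' y) -> Ih w = Ih w'.
Proof.
by move=> ww'; apply: funext => x; congr inf; apply: eq_imagel => y Xhy; rewrite ww'.
Qed.

Lemma Fhat_topical : topical Xh (Funk C) (fun w => F (Ih w)).
Proof.
have [F_lip F_le F_addr] := Fop_topical.
split=> [w w_lip x y Xhx Xhy|w w' w_lip w'_lip ww' x Xhx|w c w_lip x Xhx].
- by apply: F_lip; [exact: Iplus_lip | exact: Xh_X | exact: Xh_X].
- apply: F_le; [exact: Iplus_lip | exact: Iplus_lip | | exact: Xh_X].
  exact: Iplus_le.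
rewrite -F_addr; [|exact: Iplus_lip | exact: Xh_X].
apply: (topical_eq Fop_topical); [| |exact: Iplus_addr | exact: Xh_X].
  exact/Iplus_lip/lip1_addr.
exact/lip1_addr/Iplus_lip.
Qed.

Lemma finite_totally_bounded : totally_bounded Xh (Funk C).
Proof.
move=> eps eps_gt0; have [Fh Xh_Fh] := finite_fsetP.1 Xh_finite.
exists Fh => [|x Xhx]; first by rewrite Xh_Fh.
exists x; first by move: Xhx; rewrite Xh_Fh.
by rewrite (Funk_id C_cone e_dual (Xh_X Xhx).2); split; exact: ltW.
Qed.

Lemma Fop_eigenvector : exists lam v,
  [/\ Lip1 C X v, distance_like C X v & forall x, X x -> F v x = lam + v x].
Proof.
have [x0 Xx0] := X0; have [D Funk_le] := small_cone_diameter.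
have [lam [v [v_lip Fv]]] := topical_eigenvector Funk_small_cone_ge0 Fop_topical
  small_cone_totally_bounded Xx0 Funk_le.
by exists lam, v; split=> //; exact: lip1_distance_like.
Qed.

Lemma Fhat_eigenvector : exists lam w,
  [/\ Lip1 C Xh w, distance_like C Xh w & forall y, Xh y -> F (Ih w) y = lam + w y].
Proof.
have [y0 Xhy0] := Xh0; have [D Funk_le] := small_cone_diameter.
have [lam [w [w_lip Fw]]] := topical_eigenvector
  (fun x y Xhx Xhy => Funk_small_cone_ge0 (Xh_X Xhx) (Xh_X Xhy)) Fhat_topical
  finite_totally_bounded Xhy0 (fun x y Xhx Xhy => Funk_le x y (Xh_X Xhx) (Xh_X Xhy)).
by exists lam, w; split=> //; exact: lip1_distance_like.
Qed.

(* If [F (I w) = lam + w] on [Xh], then [v := F (I w) - lam] agrees with [w]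
   on [Xh], hence [I v = I w]. *)
Lemma Fplus_eigenvector : exists lam v,
  [/\ Lip1 C X v, distance_like C X v & forall x, X x -> F (Ih v) x = lam + v x].
Proof.
have [lam [w [w_lip _ Fw]]] := Fhat_eigenvector.
pose v x := F (Ih w) x - lam.
have v_lip : Lip1 C X v by apply/lip1_addr/(topical_lip Fop_topical)/Iplus_lip.
exists lam, v; split=> //; first by apply: lip1_distance_like.
move=> x Xx; rewrite (@Iplus_eq v w) => [|y Xhy]; first by rewrite /v addrC subrK.
by rewrite /v Fw // addrC addKr.
Qed.

End SmallCone.

Theorem corollary2 (R : realType) (n : nat) (C : set 'rV[R]_n) (e : 'rV[R]_n)
  (TA TB : topologicalType) (Aset : set TA) (Bset : set TB)
  (T : TA -> TB -> 'rV[R]_n -> 'rV[R]_n)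
  (K : set 'rV[R]_n) (h : R) (Xh : set 'rV[R]_n) :
  closed C -> is_convex_cone C -> pointed C -> interior C !=set0 ->
  interior (dual_cone C) e ->
  compact Aset -> Aset !=set0 -> compact Bset -> Bset !=set0 ->
  (forall a b x, Aset a -> Bset b -> interior C x -> interior C (T a b x)) ->
  (forall a b x y, Aset a -> Bset b -> interior C x -> interior C y ->
     Funk C (T a b x) (T a b y) <= Funk C x y) ->
  (forall b x, Bset b -> interior C x ->
     {within Aset, continuous (fun a => T a b x)}) ->
  (forall a x, Aset a -> interior C x ->
     {within Bset, continuous (fun b => T a b x)}) ->
  (forall Kc : set 'rV[R]_n, compact Kc -> Kc `<=` interior C ->
     compact [set T p.1.1 p.1.2 p.2 | p in (Aset `*` Bset) `*` Kc]) ->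
  (forall a b, Aset a -> Bset b -> {within C, continuous (T a b)}) ->
  closed K -> is_cone K -> K `<=` C ->
  (forall a b x, Aset a -> Bset b -> K x -> K (T a b x)) ->
  let X := K `&` simplex C e in
  X `<=` relint (simplex C e) -> X !=set0 ->
  0 < h -> finite_set Xh -> Xh `<=` X ->
  X `<=` \bigcup_(y in Xh) [set x | Hil C x y < h] ->
  [/\ (exists (lam : R) (v : 'rV[R]_n -> R),
         [/\ Lip1 C X v, distance_like C X v &
             forall x, X x -> Fop Aset Bset T e v x = lam + v x]),
      (exists (lam : R) (v : 'rV[R]_n -> R),
         [/\ Lip1 C X v, distance_like C X v &
             forall x, X x -> Fop Aset Bset T e (Iplus C Xh v) x = lam + v x]) &
      (exists (lam : R) (v : 'rV[R]_n -> R),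
         [/\ Lip1 C Xh v, distance_like C Xh v &
             forall y, Xh y -> Fop Aset Bset T e (Iplus C Xh v) y = lam + v y])].
Proof.
move=> C_closed C_cone _ C_int e_int _ A0 _ B0 T_int T_Funk _ _ T_compact _
  K_closed K_cone _ T_K X X_relint X0 _ Xh_finite Xh_X X_cover.
(* The
   covering of [X] by Hilbert balls is only used to see that [Xh] is nonempty. *)
have Xh0 : Xh !=set0.
  by have [x Xx] := X0; have [y Xhy _] := X_cover x Xx; exists y.
split.
- exact: (Fop_eigenvector C_closed C_cone C_int e_int K_closed K_cone X_relint X0 A0 B0
    T_int T_Funk T_compact T_K).
- exact: (Fplus_eigenvector C_closed C_cone C_int e_int K_closed K_cone X_relint X0 A0 B0
    T_int T_Funk T_compact T_K Xh_X Xh0 Xh_finite).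
- exact: (Fhat_eigenvector C_closed C_cone C_int e_int K_closed K_cone X_relint X0 A0 B0
    T_int T_Funk T_compact T_K Xh_X Xh0 Xh_finite).
Qed.
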